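(* Let $\mathcal{D}=(\mathcal{V},\mathcal{E})$ be a simple digraph with $\mathcal{V}=\{1,\ldots,n\}$, $n\ge 2$, and let $L$ be its Laplacian matrix with rows $L_1,\dots,L_n$. Then $$r_{\max}(\mathcal{D})=\min_{b^1,b^2}\ \max\Big(\max_{i} L_i b^1,\ \max_j L_j b^2\Big)$$ subject to $b^1+b^2\le \mathbf 1$ (componentwise), $1\le \mathbf 1^T b^1\le n-1$, $1\le \mathbf 1^T b^2\le n-1$, and $b^1,b^2\in\{0,1\}^n$, where $i,j$ range over $\{1,\ldots,n\}$.
   Context: A simple digraph has no self-loops and at most one directed edge $(i,j)$ from $i$ to $j$. For $j\in\mathcal{V}$, $\mathcal{N}_j=\{i\in\mathcal{V}:(i,j)\in\mathcal{E}\}$ is the set of in-neighbors of $j$. The Laplacian $L\in\mathbb{R}^{n\times n}$ has entries $L_{j,j}=|\mathcal{N}_j|$, $L_{j,i}=-1$ if $i\neq j$ and $i\in\mathcal{N}_j$, and $L_{j,i}=0$ if $i\ne j$ and $i\notin\mathcal{N}_j$. For $r\in\mathbb{Z}_{\ge 0}$, a nonempty subset $S\subseteq\mathcal{V}$ is $r$-reachable if there exists $i\in S$ with $|\mathcal{N}_i\setminus S|\ge r$. A digraph on $n\ge 2$ nodes is $r$-robust if for every pair of nonempty, disjoint subsets of $\mathcal{V}$, at least one of them is $r$-reachable. $r_{\max}(\mathcal{D})$ denotes the largest integer $r\ge 0$ for which $\mathcal{D}$ is $r$-robust. $\mathbf 1$ is the all-ones vector of length $n$. *)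

From HB Require Import structures.
From mathcomp Require Import all_boot all_order all_algebra.
Set Implicit Arguments. Unset Strict Implicit. Unset Printing Implicit Defensive.
Import Order.TTheory GRing.Theory Num.Theory.
Local Open Scope ring_scope.

(* A simple digraph on vertex set 'I_n is an edge relation e : rel 'I_n
   ((i,j) is an edge iff e i j) with no self-loops; "at most one edge from
   i to j" is automatic for a relation. *)
Definition simple_digraph n (e : rel 'I_n) : Prop := forall i, ~~ e i i.

Definition innb n (e : rel 'I_n) (j : 'I_n) : {set 'I_n} := [set i | e i j].

Definition laplacian n (e : rel 'I_n) : 'M[int]_n :=
  \matrix_(j, i) (if i == j then (#|innb e j|%:Z)%R
                  else if i \in innb e j then (-1)%R else 0%R).

(* S is r-reachable: exists i in S with |N_i \ S| >= r (S nonempty is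
   required separately where used). *)
Definition r_reachable n (e : rel 'I_n) (S : {set 'I_n}) (r : nat) : bool :=
  [exists i in S, (r <= #|innb e i :\: S|)%N].

Definition r_robust n (e : rel 'I_n) (r : nat) : bool :=
  [forall S1 : {set 'I_n}, forall S2 : {set 'I_n},
     ((S1 != set0) && (S2 != set0) && [disjoint S1 & S2]) ==>
     (r_reachable e S1 r || r_reachable e S2 r)].

(* Since
   |N_i \ S| <= n - 1, no digraph on n >= 2 nodes is n-robust, so the
   largest such r lies below n.+1 (and 0-robustness always holds). *)
Definition r_max n (e : rel 'I_n) : nat :=
  (\max_(r < n.+1 | r_robust e r) r)%N.

Definition vmax n (F : 'I_n -> int) : int :=
  match [pick i : 'I_n] with
  | Some i0 => \big[Num.max/F i0]_(i < n) F i
  | None => 0%R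
  end.

Definition binvec n (b : 'cV[int]_n) : Prop :=
  forall i, b i ord0 = 0%R \/ b i ord0 = 1%R.

Definition feasible n (b1 b2 : 'cV[int]_n) : Prop :=
  [/\ binvec b1, binvec b2,
      (forall i, b1 i ord0 + b2 i ord0 <= 1)%R,
      (1 <= \sum_i b1 i ord0 <= n%:Z - 1)%R &
      (1 <= \sum_i b2 i ord0 <= n%:Z - 1)%R].

Definition objective n (e : rel 'I_n) (b1 b2 : 'cV[int]_n) : int :=
  Num.max (vmax (fun i => (laplacian e *m b1) i ord0))
          (vmax (fun j => (laplacian e *m b2) j ord0)).

From HB Require Import structures.
From mathcomp Require Import all_boot all_order all_algebra zify.
Import Order.TTheory GRing.Theory Num.Theory.
Set Implicit Arguments. Unset Strict Implicit. Unset Printing Implicit Defensive.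
Local Open Scope ring_scope.

(* A 0/1 vector b is the indicator of the set S = {i | b_i = 1}, and then
   (L b)_i = |N_i \ S| for i in S while (L b)_i <= 0 outside S.  Hence the
   largest entry of L b is the reachability degree
   max_{i in S} |N_i \ S| of S, so the optimisation problem minimises
   max(deg S1, deg S2) over pairs of disjoint nonempty sets.  A set S is
   r-reachable iff r <= deg S, so the digraph is r-robust iff r is at most
   that minimum, i.e. the minimum is r_max. *)

Lemma le_vmax n (F : 'I_n -> int) i : F i <= vmax F.
Proof. by rewrite /vmax; case: pickP => [i0 _|/(_ i)//]; apply: le_bigmax. Qed.

Lemma vmax_le n (F : 'I_n -> int) x :
  (0 < n)%N -> (forall i, F i <= x) -> vmax F <= x.
Proof.
move=> n_gt0 leFx; rewrite /vmax; case: pickP => [i0 _|/(_ (Ordinal n_gt0))//].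
exact: bigmax_le.
Qed.

Section Robustness.

Variables (n : nat) (e : rel 'I_n).
Hypothesis loopless : simple_digraph e.

Definition indicator_col (S : {set 'I_n}) : 'cV[int]_n :=
  \col_i (if i \in S then 1 else 0).

Definition reach_deg (S : {set 'I_n}) : nat := (\max_(i in S) #|innb e i :\: S|)%N.

Definition admissible_pair (S1 S2 : {set 'I_n}) : bool :=
  (S1 != set0) && (S2 != set0) && [disjoint S1 & S2].

Lemma sum_indicator_col (S : {set 'I_n}) : \sum_i indicator_col S i ord0 = #|S|%:R.
Proof.
under eq_bigr => i _ do rewrite mxE.
by rewrite -big_mkcond sumr_const.
Qed.

Lemma indicator_colE (b : 'cV[int]_n) :
  binvec b -> b = indicator_col [set i | b i ord0 == 1].
Proof.
by move=> b01; apply/matrixP => i j; rewrite (ord1 j) !mxE inE; case: (b01 i) => ->.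
Qed.

Lemma laplacian_indicator (S : {set 'I_n}) i :
  (laplacian e *m indicator_col S) i ord0 =
  (if i \in S then #|innb e i|%:R else 0) - #|innb e i :&: S|%:R.
Proof.
rewrite mxE (bigD1 i) //= !mxE eqxx.
have -> : \sum_(k < n | k != i) laplacian e i k * indicator_col S k ord0 =
          - \sum_(k in innb e i :&: S) 1.
  rewrite -sumrN big_mkcond [RHS]big_mkcond /=; apply: eq_bigr => k _.
  have [->|/negbTE k_neq_i] := eqVneq k i; first by rewrite !inE (negbTE (loopless i)).
  rewrite !mxE k_neq_i /innb !inE.
  by case: (e k i); case: (k \in S); rewrite ?mulr1 ?mulr0 ?oppr0.
by rewrite sumr_const; case: (i \in S); rewrite ?mulr1 ?mulr0 ?natz.
Qed.

Lemma laplacian_indicator_in (S : {set 'I_n}) i : i \in S ->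
  (laplacian e *m indicator_col S) i ord0 = #|innb e i :\: S|%:Z.
Proof.
move=> iS; rewrite laplacian_indicator iS -(cardsID S (innb e i)) natrD.
by rewrite addrAC subrr add0r natz.
Qed.

Lemma laplacian_indicator_out (S : {set 'I_n}) i : i \notin S ->
  (laplacian e *m indicator_col S) i ord0 <= 0.
Proof. by move=> iNS; rewrite laplacian_indicator (negbTE iNS) sub0r oppr_le0. Qed.

Lemma reach_deg_attained (S : {set 'I_n}) : S != set0 ->
  exists2 i, i \in S & reach_deg S = #|innb e i :\: S|.
Proof.
rewrite -card_gt0 => S_gt0.
by have [i iS degE] := eq_bigmax_cond (fun i => #|innb e i :\: S|) S_gt0; exists i.
Qed.

Lemma reach_deg_le (S : {set 'I_n}) : (reach_deg S <= n)%N.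
Proof. by apply/bigmax_leqP => i _; apply: leq_trans (max_card _) _; rewrite card_ord. Qed.

Lemma vmax_laplacian_indicator (S : {set 'I_n}) : S != set0 ->
  vmax (fun i => (laplacian e *m indicator_col S) i ord0) = (reach_deg S)%:Z.
Proof.
move=> S_neq0; have [i0 i0S degE] := reach_deg_attained S_neq0.
set F := fun i => _; apply/eqP; rewrite eq_le; apply/andP; split.
  apply: vmax_le => [|i]; first exact: leq_ltn_trans (leq0n i0) (ltn_ord i0).
  have [iS|iNS] := boolP (i \in S).
    by rewrite /F laplacian_indicator_in // lez_nat (leq_bigmax_cond _ iS).
  exact: le_trans (laplacian_indicator_out iNS) _.
by rewrite degE -(laplacian_indicator_in i0S); apply: (le_vmax F).
Qed.

Lemma r_reachable_reach_deg (S : {set 'I_n}) r : S != set0 ->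
  r_reachable e S r = (r <= reach_deg S)%N.
Proof.
move=> S_neq0; apply/existsP/idP => [[i /andP[iS r_le]]|].
  exact: leq_trans r_le (leq_bigmax_cond _ iS).
by have [i iS ->] := reach_deg_attained S_neq0; exists i; rewrite iS.
Qed.

Lemma objective_indicator (S1 S2 : {set 'I_n}) : S1 != set0 -> S2 != set0 ->
  objective e (indicator_col S1) (indicator_col S2) =
  (maxn (reach_deg S1) (reach_deg S2))%:Z.
Proof.
move=> S1_neq0 S2_neq0; rewrite /objective !vmax_laplacian_indicator //.
by case: leqP => h; [apply/max_idPr|apply/max_idPl]; rewrite lez_nat // ltnW.
Qed.

Lemma feasible_indicator (S1 S2 : {set 'I_n}) :
  admissible_pair S1 S2 -> feasible (indicator_col S1) (indicator_col S2).
Proof.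
case/andP=> /andP[]; rewrite -!card_gt0 => S1_gt0 S2_gt0 S12_disj.
have card_sum : (#|S1| + #|S2| <= n)%N.
  rewrite -cardsUI (disjoint_setI0 S12_disj) cards0 addn0.
  by apply: leq_trans (max_card _) _; rewrite card_ord.
have col01 S i : indicator_col S i ord0 = 0 \/ indicator_col S i ord0 = 1.
  by rewrite mxE; case: ifP; [right|left].
split=> [||i||]; rewrite ?sum_indicator_col.
- by move=> i; apply: col01.
- by move=> i; apply: col01.
- rewrite !mxE; case: ifP => iS1; case: ifP => iS2 //.
  by move: S12_disj => /disjointFr/(_ iS1); rewrite iS2.
- lia.
- lia.
Qed.

Lemma feasible_indicatorP (b1 b2 : 'cV[int]_n) : feasible b1 b2 ->
  exists S1 S2, [/\ b1 = indicator_col S1, b2 = indicator_col S2 &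
                    admissible_pair S1 S2].
Proof.
case=> b1_01 b2_01 b12_le1 sum_b1 sum_b2.
exists [set i | b1 i ord0 == 1], [set i | b2 i ord0 == 1].
have b1E := indicator_colE b1_01; have b2E := indicator_colE b2_01.
split=> //; apply/andP; split; [apply/andP; split|].
- by rewrite -card_gt0; move: sum_b1; rewrite [in X in X -> _]b1E sum_indicator_col; lia.
- by rewrite -card_gt0; move: sum_b2; rewrite [in X in X -> _]b2E sum_indicator_col; lia.
rewrite disjoints_subset; apply/subsetP => i; rewrite !inE => /eqP b1i.
by apply/negP => /eqP b2i; have := b12_le1 i; rewrite b1i b2i.
Qed.

Lemma r_robust_admissible r :
  r_robust e r = [forall S1, forall S2,
    admissible_pair S1 S2 ==> (r <= maxn (reach_deg S1) (reach_deg S2))%N].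
Proof.
apply: eq_forallb => S1; apply: eq_forallb => S2.
rewrite -/(admissible_pair S1 S2).
have [/andP[/andP[S1_neq0 S2_neq0] _] /=|//] := boolP (admissible_pair S1 S2).
by rewrite !r_reachable_reach_deg // leq_max.
Qed.

Lemma r_max_le_admissible (S1 S2 : {set 'I_n}) : admissible_pair S1 S2 ->
  (r_max e <= maxn (reach_deg S1) (reach_deg S2))%N.
Proof.
move=> S12_adm; apply/bigmax_leqP => r; rewrite r_robust_admissible.
by move=> /forallP/(_ S1)/forallP/(_ S2)/implyP; apply.
Qed.

Lemma r_max_admissible_min : (2 <= n)%N ->
  exists2 S : {set 'I_n} * {set 'I_n}, admissible_pair S.1 S.2 &
    r_max e = maxn (reach_deg S.1) (reach_deg S.2).
Proof.
move=> n_ge2; pose v0 : 'I_n := Ordinal (ltnW n_ge2); pose v1 : 'I_n := Ordinal n_ge2.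
have adm01 : admissible_pair [set v0] [set v1].
  by rewrite /admissible_pair -!card_gt0 !cards1 disjoints1 inE.
case: (@arg_minnP _ ([set v0], [set v1]) (fun S => admissible_pair S.1 S.2)
          (fun S => maxn (reach_deg S.1) (reach_deg S.2)) adm01).
move=> [S1 S2] /= S12_adm S12_min; exists (S1, S2) => //=.
apply/eqP; rewrite eqn_leq r_max_le_admissible //=.
have deg_lt : (maxn (reach_deg S1) (reach_deg S2) < n.+1)%N.
  by rewrite ltnS geq_max !reach_deg_le.
apply: (leq_bigmax_cond (Ordinal deg_lt)); rewrite /= r_robust_admissible.
apply/forallP => T1; apply/forallP => T2; apply/implyP => T12_adm.
exact: (S12_min (T1, T2)).
Qed.

End Robustness.

Theorem theorem1 (n : nat) (e : rel 'I_n) :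
  (2 <= n)%N -> simple_digraph e ->
  (exists b1 b2 : 'cV[int]_n,
      feasible b1 b2 /\ objective e b1 b2 = ((r_max e)%:Z)%R) /\
  (forall b1 b2 : 'cV[int]_n,
      feasible b1 b2 -> (((r_max e)%:Z) <= objective e b1 b2)%R).
Proof.
move=> n_ge2 loopless; split.
  have [[S1 S2] /= S12_adm ->] := r_max_admissible_min e n_ge2.
  exists (indicator_col S1), (indicator_col S2); split; first exact: feasible_indicator.
  by case/andP: S12_adm => /andP[S1_neq0 S2_neq0] _; rewrite objective_indicator.
move=> b1 b2 /feasible_indicatorP[S1 [S2 [-> -> S12_adm]]].
have /andP[/andP[S1_neq0 S2_neq0] _] := S12_adm.
by rewrite objective_indicator // lez_nat r_max_le_admissible.
Qed.
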